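(* In $U_q(L(\mathfrak{sl}_2))$ the elements $A,A^*$ satisfy $$A^3A^*-[3]_qA^2A^*A+[3]_qAA^*A^2-A^*A^3=\gamma(A^2A^*-A^*A^2)+\varrho(AA^*-A^*A),$$ $$A^{*3}A-[3]_qA^{*2}AA^*+[3]_qA^*AA^{*2}-AA^{*3}=\gamma^*(A^{*2}A-AA^{*2})+\varrho^*(A^*A-AA^* ),$$ where $\gamma=-a(q-q^{-1})^2$, $\varrho=a^2(q-q^{-1})^2-bc(q^2-q^{-2})^2$, $\gamma^*=-a^*(q-q^{-1})^2$, $\varrho^*=a^{*2}(q-q^{-1})^2-b^*c^*(q^2-q^{-2})^2$.
   Context: Let $\mathbb F$ be an algebraically closed field and fix $q,a,b,c,a^*,b^*,c^*\in\mathbb F$ with $q,b,c,b^*,c^*$ nonzero and $q^2\neq\pm1$; write $[n]_q=(q^n-q^{-n})/(q-q^{-1})$. $U_q(\widehat{\mathfrak{sl}}_2)$ is the associative unital $\mathbb F$-algebra with generators $e_i^{\pm},K_i^{\pm1}$ ($i\in\{0,1\}$) and relations $K_iK_i^{-1}=K_i^{-1}K_i=1$, $K_0K_1=K_1K_0$, $K_ie_i^{\pm}K_i^{-1}=q^{\pm2}e_i^{\pm}$, $K_ie_j^{\pm}K_i^{-1}=q^{\mp2}e_j^{\pm}$ ($i\ne j$), $e_i^+e_i^--e_i^-e_i^+=(K_i-K_i^{-1})/(q-q^{-1})$, $e_0^{\pm}e_1^{\mp}=e_1^{\mp}e_0^{\pm}$, and $(e_i^\pm)^3e_j^\pm-[3]_q(e_i^\pm)^2e_j^\pm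 e_i^\pm+[3]_qe_i^\pm e_j^\pm(e_i^\pm)^2-e_j^\pm(e_i^\pm)^3=0$ ($i\ne j$). $U_q(L(\mathfrak{sl}_2))$ is its quotient by the two-sided ideal generated by $K_0K_1-1$ (elements denoted by the same symbols as their images). Fix $u,v,u^*,v^*\in\mathbb F$ with $uv^*=-bb^*q^{-1}(q-q^{-1})^2$ and $vu^*=-cc^*q^{-1}(q-q^{-1})^2$; set $R=ue_0^++ve_1^-K_1$, $L=u^*e_1^++v^*e_0^-K_0$, $A=a1+bK_0+cK_1+R$, $A^*=a^*1+b^*K_0+c^*K_1+L$. *)

From HB Require Import structures.
From mathcomp Require Import all_boot all_order all_algebra.
Set Implicit Arguments. Unset Strict Implicit. Unset Printing Implicit Defensive.
Import GRing.Theory.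
Local Open Scope ring_scope.

Definition qint (F : fieldType) (q : F) (n : nat) : F :=
  (q ^+ n - q ^- n) / (q - q^-1).

Definition serre (F : fieldType) (B : lalgType F) (q : F) (x y : B) : B :=
  x ^+ 3 * y - qint q 3 *: (x ^+ 2 * y * x) + qint q 3 *: (x * y * x ^+ 2)
  - y * x ^+ 3.

(* The defining relations of U_q(L(sl_2)) : those of U_q(\hat{sl}_2)
   (generators e0p = e_0^+, e0m = e_0^-, e1p = e_1^+, e1m = e_1^-, K0, K1 and
   their inverses K0i = K_0^{-1}, K1i = K_1^{-1}) together with K0 K1 = 1. *)
Record UqLsl2_rels (F : fieldType) (B : algType F) (q : F)
    (e0p e0m e1p e1m K0 K1 K0i K1i : B) : Prop := {
  rel_K0K0i : K0 * K0i = 1;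
  rel_K0iK0 : K0i * K0 = 1;
  rel_K1K1i : K1 * K1i = 1;
  rel_K1iK1 : K1i * K1 = 1;
  rel_K0K1c : K0 * K1 = K1 * K0;
  rel_K0e0p : K0 * e0p * K0i = q ^+ 2 *: e0p;
  rel_K0e0m : K0 * e0m * K0i = q ^- 2 *: e0m;
  rel_K1e1p : K1 * e1p * K1i = q ^+ 2 *: e1p;
  rel_K1e1m : K1 * e1m * K1i = q ^- 2 *: e1m;
  rel_K0e1p : K0 * e1p * K0i = q ^- 2 *: e1p;
  rel_K0e1m : K0 * e1m * K0i = q ^+ 2 *: e1m;
  rel_K1e0p : K1 * e0p * K1i = q ^- 2 *: e0p;
  rel_K1e0m : K1 * e0m * K1i = q ^+ 2 *: e0m;
  rel_comm0 : e0p * e0m - e0m * e0p = (q - q^-1)^-1 *: (K0 - K0i);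
  rel_comm1 : e1p * e1m - e1m * e1p = (q - q^-1)^-1 *: (K1 - K1i);
  rel_e0pe1m : e0p * e1m = e1m * e0p;
  rel_e0me1p : e0m * e1p = e1p * e0m;
  rel_serre01p : serre q e0p e1p = 0;
  rel_serre10p : serre q e1p e0p = 0;
  rel_serre01m : serre q e0m e1m = 0;
  rel_serre10m : serre q e1m e0m = 0;
  rel_loop : K0 * K1 = 1
}.

(* Both relations are identities between noncommutative polynomials in the
   generators, so we prove them by normal ordering.  Since K0 K1 = 1, every
   product of generators is a linear combination of monomials
        K0^i K1^j (word in e0-, e1-) (word in e0+, e1+),
   obtained by moving K's to the left with the q-commutation relations and
   lowering generators past raising ones with [e_i^+, e_i^-] and
   e_0^{+-} e_1^{-+} = e_1^{-+} e_0^{+-}; the q-Serre relations are used to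
   rewrite the words y x^3 and x y^3 among raising (resp. lowering) letters.

   The
   difference of the two sides of each relation is such an expression; its
   normal form is computed by evaluation, and every one of its coefficients
   is a rational function of q, a, b, c, a*, b*, c*, u, v that vanishes once
   v* and u* are eliminated using the constraints on u v* and v u*; this is
   checked by the [field] tactic. *)
From HB Require Import structures.
From mathcomp Require Import all_boot all_order all_algebra.
From Stdlib Require Import Field.

Set Implicit Arguments.
Unset Strict Implicit.
Unset Printing Implicit Defensive.
Import GRing.Theory.

Inductive letter := E0p | E0m | E1p | E1m.

Definition letter_code (l : letter) : nat :=
  match l with E0p => 0 | E0m => 1 | E1p => 2 | E1m => 3 end.
Definition letter_decode (n : nat) : option letter :=
  match n with 0 => Some E0p | 1 => Some E0m | 2 => Some E1p | 3 => Some E1m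
  | _ => None end.
Lemma letter_codeK : pcancel letter_code letter_decode. Proof. by case. Qed.
HB.instance Definition _ := Equality.copy letter (pcan_type letter_codeK).

Definition raising (l : letter) : bool :=
  match l with E0p | E1p => true | _ => false end.

Inductive coef :=
  | CVar of nat | Cq | Cqinv | Ccomm | Cq3 | C1
  | CAdd of coef & coef | CMul of coef & coef | COpp of coef.

(* Product dropping unit factors, to keep normal forms small. *)
Definition cmul (x y : coef) : coef :=
  match x, y with C1, _ => y | _, C1 => x | _, _ => CMul x y end.
Definition cpow (x : coef) (n : nat) : coef := iter n (cmul x) C1.

(* Exponents (i, j) of a K-monomial K0^i K1^j; a normal monomial
   K0^i K1^j M P with M a lowering word and P a raising word; a term is a
   coefficient times a normal monomial and a normal form is a list of terms. *)
Definition kexp := (nat * nat)%type.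
Definition mono := (kexp * seq letter * seq letter)%type.
Definition term := (coef * mono)%type.
Definition poly := seq term.

(* [twist0 l] is the scalar with l K0 = twist0 l K0 l; similarly for K1. *)
Definition twist0 (l : letter) : coef :=
  match l with E0p | E1m => CMul Cqinv Cqinv | _ => CMul Cq Cq end.
Definition twist1 (l : letter) : coef :=
  match l with E0p | E1m => CMul Cq Cq | _ => CMul Cqinv Cqinv end.
Definition wtwist (tw : letter -> coef) (w : seq letter) : coef :=
  foldr (fun l c => cmul (tw l) c) C1 w.
(* The scalar with w K0^i K1^j = Ktwist w (i, j) K0^i K1^j w. *)
Definition Ktwist (w : seq letter) (s : kexp) : coef :=
  cmul (cpow (wtwist twist0 w) s.1) (cpow (wtwist twist1 w) s.2).

(* Right multiplication of K0^i K1^j by K0, by K1, and by K0^i' K1^j'. *)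
Definition kshift0 (s : kexp) : kexp :=
  match s with (i, 0) => (i.+1, 0) | (i, j.+1) => (i, j) end.
Definition kshift1 (s : kexp) : kexp :=
  match s with (0, j) => (0, j.+1) | (i.+1, j) => (i, j) end.
Definition kadd (s t : kexp) : kexp := iter t.2 kshift1 (iter t.1 kshift0 s).

(* q-Serre rewriting of a word in two letters x, y:
   y x^3 = x^3 y - [3] x^2 y x + [3] x y x^2 and symmetrically for x y^3. *)
Definition serre_reduce (x y : letter) (w : seq letter)
    : seq (coef * seq letter) :=
  if w == [:: y; x; x; x] then
    [:: (C1, [:: x; x; x; y]); (COpp Cq3, [:: x; x; y; x]);
        (Cq3, [:: x; y; x; x])]
  else if w == [:: x; y; y; y] then
    [:: (C1, [:: y; y; y; x]); (COpp Cq3, [:: y; y; x; y]);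
        (Cq3, [:: y; x; y; y])]
  else [:: (C1, w)].

(* For a raising p and a lowering f: p f = f p + d (K0 - K1), where d is
   given by [swap_coef p f] (no correction term when None). *)
Definition swap_coef (p f : letter) : option coef :=
  match p, f with
  | E0p, E0m => Some Ccomm
  | E1p, E1m => Some (COpp Ccomm)
  | _, _ => None end.

(* While a lowering letter f moves left through a raising word, the partial
   results are terms (c, s, b, w) standing for c K^s f^b w. *)
Definition pterm := (coef * kexp * bool * seq letter)%type.

Definition pass_step (p f : letter) (t : pterm) : seq pterm :=
  let: (c, s, b, w) := t in
  let c1 := cmul c (Ktwist [:: p] s) in
  if b then
    (c1, s, true, p :: w) ::
    (if swap_coef p f is Some d then
       [:: (cmul c1 d, kshift0 s, false, w);
           (COpp (cmul c1 d), kshift1 s, false, w)]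
     else [::])
  else [:: (c1, s, false, p :: w)].

Fixpoint pass_lowering (P : seq letter) (f : letter) : seq pterm :=
  match P with
  | [::] => [:: (C1, (0, 0), true, [::])]
  | p :: P' => flatten [seq pass_step p f t | t <- pass_lowering P' f]
  end.

Definition mulK (tw : letter -> coef) (shift : kexp -> kexp) (t : term)
    : term :=
  let: (c, (s, M, P)) := t in
  (cmul c (cmul (wtwist tw M) (wtwist tw P)), (shift s, M, P)).

Definition mul_raising (e : letter) (t : term) : seq term :=
  let: (c, (s, M, P)) := t in
  [seq (cmul c cw.1, (s, M, cw.2)) | cw <- serre_reduce E0p E1p (P ++ [:: e])].

(* c K^s M times a partial result c' K^s' f^b w. *)
Definition absorb (c : coef) (s : kexp) (M : seq letter) (f : letter)
    (u : pterm) : seq term :=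
  let: (c', s', b, w) := u in
  let c2 := cmul c (cmul c' (Ktwist M s')) in
  if b then
    [seq (cmul c2 cw.1, (kadd s s', cw.2, w))
      | cw <- serre_reduce E0m E1m (M ++ [:: f])]
  else [:: (c2, (kadd s s', M, w))].

Definition mul_lowering (f : letter) (t : term) : seq term :=
  let: (c, (s, M, P)) := t in
  if all raising P then flatten [seq absorb c s M f u | u <- pass_lowering P f]
  else [:: (c, (s, M, P ++ [:: f]))]. (* not reached from normal monomials *)

Definition mul_letter (l : letter) (p : poly) : poly :=
  flatten [seq (if raising l then mul_raising l t else mul_lowering l t)
          | t <- p].

Definition pscale (c : coef) (p : poly) : poly :=
  [seq (cmul c t.1, t.2) | t <- p].

Fixpoint insert_term (t : term) (p : poly) : poly :=
  match p with
  | [::] => [:: t]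
  | t' :: p' =>
    if t.2 == t'.2 then (CAdd t'.1 t.1, t'.2) :: p' else t' :: insert_term t p'
  end.
Definition collect (p : poly) : poly := foldr insert_term [::] p.

Definition mul_mono (p : poly) (t : term) : poly :=
  let: (c, ((i, j), M, P)) := t in
  pscale c (foldl (fun p l => mul_letter l p)
                  (iter j (map (mulK twist1 kshift1))
                     (iter i (map (mulK twist0 kshift0)) p)) (M ++ P)).

Definition pmul (p1 p2 : poly) : poly :=
  collect (flatten [seq mul_mono p1 t | t <- p2]).
Definition pone : poly := [:: (C1, ((0, 0), [::], [::]))].

Inductive expr :=
  | XK0 | XK1 | XGen of letter | XOne
  | XAdd of expr & expr | XSub of expr & expr | XMul of expr & expr
  | XScale of coef & expr | XPow of expr & nat.

Fixpoint nf (e : expr) : poly :=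
  match e with
  | XK0 => [:: (C1, ((1, 0), [::], [::]))]
  | XK1 => [:: (C1, ((0, 1), [::], [::]))]
  | XGen l => if raising l then [:: (C1, ((0, 0), [::], [:: l]))]
              else [:: (C1, ((0, 0), [:: l], [::]))]
  | XOne => pone
  | XAdd x y => collect (nf x ++ nf y)
  | XSub x y => collect (nf x ++ pscale (COpp C1) (nf y))
  | XMul x y => pmul (nf x) (nf y)
  | XScale c x => pscale c (nf x)
  | XPow x n => iter n (pmul (nf x)) pone
  end.

Definition A_expr (a b c u v : coef) : expr :=
  XAdd (XAdd (XAdd (XScale a XOne) (XScale b XK0)) (XScale c XK1))
       (XAdd (XScale u (XGen E0p)) (XScale v (XMul (XGen E1m) XK1))).
Definition As_expr (a b c u v : coef) : expr :=
  XAdd (XAdd (XAdd (XScale a XOne) (XScale b XK0)) (XScale c XK1))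
       (XAdd (XScale u (XGen E1p)) (XScale v (XMul (XGen E0m) XK0))).

Definition serre_expr (x y : expr) : expr :=
  XSub (XAdd (XSub (XMul (XPow x 3) y)
                   (XScale Cq3 (XMul (XMul (XPow x 2) y) x)))
             (XScale Cq3 (XMul (XMul x y) (XPow x 2))))
       (XMul y (XPow x 3)).
Definition tridiag_expr (x y : expr) (g r : coef) : expr :=
  XSub (serre_expr x y)
       (XAdd (XScale g (XSub (XMul (XPow x 2) y) (XMul y (XPow x 2))))
             (XScale r (XSub (XMul x y) (XMul y x)))).

(* The two relations; the variables CVar 0, ..., CVar 13 stand for
   a, b, c, a*, b*, c*, u, v, u*, v*, gamma, rho, gamma*, rho*. *)
Definition A_var := A_expr (CVar 0) (CVar 1) (CVar 2) (CVar 6) (CVar 7).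
Definition As_var := As_expr (CVar 3) (CVar 4) (CVar 5) (CVar 8) (CVar 9).
Definition first_rel : expr := tridiag_expr A_var As_var (CVar 10) (CVar 11).
Definition second_rel : expr := tridiag_expr As_var A_var (CVar 12) (CVar 13).

(* The coefficients of the normal forms of [first_rel] and [second_rel] are
   rational functions; their vanishing is an identity in any field.  It is
   checked with the [field] tactic for a field given by its operations. *)
Section FieldIdentities.

Variables (R : Type) (zero one : R) (add mul sub : R -> R -> R) (opp : R -> R)
  (div : R -> R -> R) (inv : R -> R).
Hypothesis Rfield : field_theory zero one add mul sub opp div inv (@eq R).
Add Field R_field : Rfield.

Local Notation "0" := zero.
Local Notation "1" := one.
Local Notation "x + y" := (add x y).
Local Notation "x * y" := (mul x y).
Local Notation "x - y" := (sub x y).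
Local Notation "- x" := (opp x).
Local Notation "x / y" := (div x y).
Local Notation "/ x" := (inv x).

Local Ltac evaluate_nf e :=
  let l := eval vm_compute in (nf e) in
  have -> : nf e = l by vm_compute.

Fixpoint coef_eval (q : R) (env : seq R) (x : coef) : R :=
  match x with
  | CVar n => nth 0 env n | Cq => q | Cqinv => / q | Ccomm => / (q - / q)
  | Cq3 => (q * (q * q) - / (q * (q * q))) / (q - / q) | C1 => 1
  | CAdd x y => coef_eval q env x + coef_eval q env y
  | CMul x y => coef_eval q env x * coef_eval q env y
  | COpp x => - coef_eval q env x
  end.

Lemma tridiagonal_coefficients (q a b c a' b' c' u v u' v' g r g' r' : R) :
  q <> 0 -> q - / q <> 0 -> q * q - 1 <> 0 -> u <> 0 -> v <> 0 ->
  v' = - (b * b' * / q * ((q - / q) * (q - / q))) / u ->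
  u' = - (c * c' * / q * ((q - / q) * (q - / q))) / v ->
  g = - (a * ((q - / q) * (q - / q))) ->
  r = a * a * ((q - / q) * (q - / q))
      - b * c * ((q * q - / (q * q)) * (q * q - / (q * q))) ->
  g' = - (a' * ((q - / q) * (q - / q))) ->
  r' = a' * a' * ((q - / q) * (q - / q))
      - b' * c' * ((q * q - / (q * q)) * (q * q - / (q * q))) ->
  let env := [:: a; b; c; a'; b'; c'; u; v; u'; v'; g; r; g'; r'] in
  List.Forall (fun t => coef_eval q env t.1 = 0) (nf first_rel) /\
  List.Forall (fun t => coef_eval q env t.1 = 0) (nf second_rel).
Proof.
move=> q0 qq0 qq1 u0 v0 -> -> -> -> -> -> env; rewrite /env.
split; [evaluate_nf first_rel | evaluate_nf second_rel];
repeat (first [apply: List.Forall_nil | apply: List.Forall_cons]);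
cbn [coef_eval nth fst]; field; repeat split; assumption.
Qed.

End FieldIdentities.

Local Open Scope ring_scope.

Section Semantics.

Variables (F : fieldType) (q : F) (env : seq F).

Fixpoint coef_val (x : coef) : F :=
  match x with
  | CVar n => nth 0 env n | Cq => q | Cqinv => q^-1 | Ccomm => (q - q^-1)^-1
  | Cq3 => qint q 3 | C1 => 1
  | CAdd x y => coef_val x + coef_val y | CMul x y => coef_val x * coef_val y
  | COpp x => - coef_val x
  end.

Lemma coef_val_cmul x y : coef_val (cmul x y) = coef_val x * coef_val y.
Proof. by case: x => *; case: y => * /=; rewrite ?mul1r ?mulr1. Qed.

Lemma coef_val_cpow x n : coef_val (cpow x n) = coef_val x ^+ n.
Proof. by elim: n => [|n IH] //=; rewrite coef_val_cmul IH exprS. Qed.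

Variables (B : algType F) (e0p e0m e1p e1m K0 K1 K0i K1i : B).
Hypothesis rels : UqLsl2_rels q e0p e0m e1p e1m K0 K1 K0i K1i.
Hypothesis q_neq0 : q != 0.

Definition letter_val (l : letter) : B :=
  match l with E0p => e0p | E0m => e0m | E1p => e1p | E1m => e1m end.
Definition word_val (w : seq letter) : B := \prod_(l <- w) letter_val l.
Definition kexp_val (s : kexp) : B := K0 ^+ s.1 * K1 ^+ s.2.
Definition mono_val (m : mono) : B :=
  kexp_val m.1.1 * word_val m.1.2 * word_val m.2.
Definition term_val (t : term) : B := coef_val t.1 *: mono_val t.2.
Definition poly_val (p : poly) : B := \sum_(t <- p) term_val t.

Lemma term_valE c s M P :
  term_val (c, (s, M, P)) =
  coef_val c *: (kexp_val s * word_val M * word_val P).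
Proof. by []. Qed.

Lemma poly_val_cons t p : poly_val (t :: p) = term_val t + poly_val p.
Proof. exact: big_cons. Qed.

Lemma poly_val_cat p1 p2 : poly_val (p1 ++ p2) = poly_val p1 + poly_val p2.
Proof. exact: big_cat. Qed.

Lemma kexp_val0 : kexp_val (0, 0) = 1.
Proof. by rewrite /kexp_val !expr0 mulr1. Qed.

Lemma word_val_cat w1 w2 : word_val (w1 ++ w2) = word_val w1 * word_val w2.
Proof. exact: big_cat. Qed.

Lemma word_val1 l : word_val [:: l] = letter_val l.
Proof. exact: big_seq1. Qed.

Lemma word_val_cons l w : word_val (l :: w) = letter_val l * word_val w.
Proof. exact: big_cons. Qed.

Lemma sum_flatten_mapl {X Y : Type} (vx : X -> B) (vy : Y -> B)
    (expand : Y -> seq X) (ys : seq Y) (z : B) :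
  (forall y, \sum_(x <- expand y) vx x = z * vy y) ->
  \sum_(x <- flatten [seq expand y | y <- ys]) vx x = z * \sum_(y <- ys) vy y.
Proof. by move=> H; rewrite big_flatten big_map mulr_sumr; apply: eq_bigr. Qed.

Lemma sum_flatten_mapr {X Y : Type} (vx : X -> B) (vy : Y -> B)
    (expand : Y -> seq X) (ys : seq Y) (z : B) :
  (forall y, \sum_(x <- expand y) vx x = vy y * z) ->
  \sum_(x <- flatten [seq expand y | y <- ys]) vx x = (\sum_(y <- ys) vy y) * z.
Proof. by move=> H; rewrite big_flatten big_map mulr_suml; apply: eq_bigr. Qed.

Lemma K0K1 : K0 * K1 = 1. Proof. exact: rel_loop rels. Qed.
Lemma K1K0 : K1 * K0 = 1. Proof. by rewrite -(rel_K0K1c rels) K0K1. Qed.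
Lemma K0i_K1 : K0i = K1.
Proof. by rewrite -[K0i]mulr1 -K0K1 mulrA (rel_K0iK0 rels) mul1r. Qed.
Lemma K1i_K0 : K1i = K0.
Proof. by rewrite -[K1i]mul1r -K0K1 -mulrA (rel_K1K1i rels) mulr1. Qed.

Lemma move_left (K K' x : B) (s r : F) :
  K' * K = 1 -> K * x * K' = s *: x -> r * s = 1 -> x * K = r *: (K * x).
Proof.
move=> KK' Kx rs.
have -> : K * x = s *: (x * K) by rewrite -[K * x]mulr1 -KK' mulrA Kx scalerAl.
by rewrite scalerA rs scale1r.
Qed.

Lemma qinv_sq : q^-1 * q^-1 * q ^+ 2 = 1.
Proof. by rewrite expr2 mulrACA mulVf // mulr1. Qed.
Lemma q_sq : q * q * q ^- 2 = 1.
Proof. by rewrite expr2 mulfV // mulf_neq0. Qed.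

Lemma twist0P l :
  letter_val l * K0 = coef_val (twist0 l) *: (K0 * letter_val l).
Proof.
have KK := K1K0; case: l => /=; apply: (move_left KK); rewrite -?K0i_K1.
- exact: rel_K0e0p rels. - exact: qinv_sq.
- exact: rel_K0e0m rels. - exact: q_sq.
- exact: rel_K0e1p rels. - exact: q_sq.
- exact: rel_K0e1m rels. - exact: qinv_sq.
Qed.

Lemma twist1P l :
  letter_val l * K1 = coef_val (twist1 l) *: (K1 * letter_val l).
Proof.
have KK := K0K1; case: l => /=; apply: (move_left KK); rewrite -?K1i_K0.
- exact: rel_K1e0p rels. - exact: q_sq.
- exact: rel_K1e0m rels. - exact: qinv_sq.
- exact: rel_K1e1p rels. - exact: qinv_sq.
- exact: rel_K1e1m rels. - exact: q_sq.
Qed.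

Section Twisting.

Variables (K : B) (tw : letter -> coef).
Hypothesis twP :
  forall l, letter_val l * K = coef_val (tw l) *: (K * letter_val l).

Lemma word_twist w :
  word_val w * K = coef_val (wtwist tw w) *: (K * word_val w).
Proof.
elim: w => [|l w IH]; first by rewrite /word_val big_nil mul1r mulr1 scale1r.
rewrite !word_val_cons /= coef_val_cmul -mulrA IH -scalerAr.
rewrite [letter_val l * (K * _)]mulrA twP.
by rewrite -scalerAl scalerA -mulrA [coef_val (tw l) * _]mulrC.
Qed.

Lemma word_twistX w n :
  word_val w * K ^+ n = coef_val (wtwist tw w) ^+ n *: (K ^+ n * word_val w).
Proof.
elim: n => [|n IH]; first by rewrite !expr0 mulr1 mul1r scale1r.
rewrite exprSr mulrA IH -scalerAl -(mulrA _ (word_val w)) word_twist -scalerAr.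
by rewrite scalerA mulrA -!exprSr.
Qed.

Lemma mono_twist s M P :
  kexp_val s * word_val M * word_val P * K =
  coef_val (cmul (wtwist tw M) (wtwist tw P)) *:
    (kexp_val s * K * word_val M * word_val P).
Proof.
rewrite -mulrA word_twist -scalerAr mulrA -(mulrA _ _ K) word_twist.
by rewrite -scalerAr -scalerAl scalerA coef_val_cmul mulrC !mulrA.
Qed.

End Twisting.

Lemma word_Ktwist w s :
  word_val w * kexp_val s = coef_val (Ktwist w s) *: (kexp_val s * word_val w).
Proof.
rewrite /kexp_val mulrA (word_twistX twist0P) -scalerAl -(mulrA _ (word_val w)).
rewrite (word_twistX twist1P) -scalerAr scalerA mulrA.
by rewrite /Ktwist coef_val_cmul !coef_val_cpow.
Qed.

(* The exponent bookkeeping is correct because K0 K1 = K1 K0 = 1. *)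
Lemma kshift0P s : kexp_val s * K0 = kexp_val (kshift0 s).
Proof.
case: s => i [|j]; rewrite /kexp_val /=; first by rewrite !expr0 !mulr1 exprSr.
by rewrite exprSr -mulrA -(mulrA (K1 ^+ j)) K1K0 mulr1.
Qed.

Lemma kshift1P s : kexp_val s * K1 = kexp_val (kshift1 s).
Proof.
case: s => [[|i] j]; rewrite /kexp_val /=; first by rewrite !mul1r exprSr.
by rewrite -mulrA -exprSr (exprS K1) (exprSr K0) -mulrA (mulrA K0) K0K1 mul1r.
Qed.

Lemma kaddP s t : kexp_val s * kexp_val t = kexp_val (kadd s t).
Proof.
have E0 n s' : kexp_val s' * K0 ^+ n = kexp_val (iter n kshift0 s').
  by elim: n => [|n IH] /=; rewrite ?mulr1 // exprSr mulrA IH kshift0P.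
have E1 n s' : kexp_val s' * K1 ^+ n = kexp_val (iter n kshift1 s').
  by elim: n => [|n IH] /=; rewrite ?mulr1 // exprSr mulrA IH kshift1P.
by rewrite /kadd {2}/kexp_val mulrA E0 E1.
Qed.

Lemma serre_reduceP x y w :
  serre q (letter_val x) (letter_val y) = 0 ->
  serre q (letter_val y) (letter_val x) = 0 ->
  \sum_(cw <- serre_reduce x y w) coef_val cw.1 *: word_val cw.2 = word_val w.
Proof.
have serre_step (x' y' : letter) :
    serre q (letter_val x') (letter_val y') = 0 ->
    \sum_(cw <- [:: (C1, [:: x'; x'; x'; y']); (COpp Cq3, [:: x'; x'; y'; x']);
                    (Cq3, [:: x'; y'; x'; x'])]) coef_val cw.1 *: word_val cw.2
    = word_val [:: y'; x'; x'; x'].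
  rewrite !big_cons big_nil /word_val !big_cons big_nil /= !mulr1 !mulrA addr0.
  move/eqP; rewrite /serre subr_eq0 !exprS expr0 !mulr1 !mulrA => /eqP <-.
  by rewrite scale1r scaleNr addrA.
move=> Sxy Syx; rewrite /serre_reduce.
case: eqP => [-> | _]; first exact: serre_step.
case: eqP => [-> | _]; first exact: serre_step.
by rewrite big_cons big_nil scale1r addr0.
Qed.

Lemma serre_raisingP w :
  \sum_(cw <- serre_reduce E0p E1p w) coef_val cw.1 *: word_val cw.2 =
  word_val w.
Proof.
by apply: serre_reduceP; [exact: rel_serre01p rels | exact: rel_serre10p rels].
Qed.

Lemma serre_loweringP w :
  \sum_(cw <- serre_reduce E0m E1m w) coef_val cw.1 *: word_val cw.2 =
  word_val w.
Proof.
by apply: serre_reduceP; [exact: rel_serre01m rels | exact: rel_serre10m rels].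
Qed.

Lemma swap_coefP p f : raising p -> ~~ raising f ->
  letter_val p * letter_val f = letter_val f * letter_val p +
    (if swap_coef p f is Some d then coef_val d *: (K0 - K1) else 0).
Proof.
case: p => //; case: f => //= _ _; rewrite ?addr0.
- by apply/eqP; rewrite addrC -subr_eq (rel_comm0 rels) K0i_K1.
- exact: rel_e0pe1m rels.
- exact: esym (rel_e0me1p rels).
- apply/eqP; rewrite addrC -subr_eq (rel_comm1 rels) K1i_K0.
  by rewrite scaleNr -scalerN opprB.
Qed.

Definition pterm_val (f : letter) (t : pterm) : B :=
  let: (c, s, b, w) := t in
  coef_val c *: (kexp_val s * ((if b then letter_val f else 1) * word_val w)).

(* One raising letter p times a partial result: twist p past K^s, then
   commute p past f if f is still present. *)
Lemma pass_stepP p f t : raising p -> ~~ raising f ->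
  \sum_(u <- pass_step p f t) pterm_val f u = letter_val p * pterm_val f t.
Proof.
move=> hp hf; case: t => [[[c s] b] w].
have -> : letter_val p * pterm_val f (c, s, b, w) =
    coef_val (cmul c (Ktwist [:: p] s)) *:
      (kexp_val s *
         (letter_val p * ((if b then letter_val f else 1) * word_val w))).
  have Hp := word_Ktwist [:: p] s; rewrite word_val1 in Hp.
  cbn [pterm_val]; rewrite -scalerAr (mulrA _ (kexp_val s)) Hp -scalerAl.
  by rewrite scalerA coef_val_cmul mulrC -!mulrA.
case: b => /=.
  rewrite big_cons; cbn [pterm_val].
  rewrite (mulrA (letter_val p)) (swap_coefP hp hf) word_val_cons.
  case: swap_coef => [d|] /=; last first.
    by rewrite big_nil !addr0 (mulrA (letter_val f)).
  rewrite !big_cons big_nil addr0; cbn [pterm_val].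
  rewrite mulrDl mulrDr scalerDr (mulrA (letter_val f)); congr (_ + _).
  rewrite -scalerAl -scalerAr scalerA mulrBl mulrBr !mulrA kshift0P kshift1P.
  by rewrite scalerBr !mulr1 [coef_val (COpp _)]/= scaleNr coef_val_cmul.
by rewrite big_seq1; cbn [pterm_val]; rewrite !mul1r word_val_cons.
Qed.

Lemma pass_loweringP P f : all raising P -> ~~ raising f ->
  \sum_(u <- pass_lowering P f) pterm_val f u = word_val P * letter_val f.
Proof.
move=> hP hf; elim: P hP => [_ | p P IH /andP [hp hP]] /=.
  rewrite big_seq1; cbn [pterm_val].
  by rewrite kexp_val0 /word_val big_nil scale1r !mul1r mulr1.
rewrite word_val_cons -mulrA -IH //.
by apply: sum_flatten_mapl => t; exact: pass_stepP.
Qed.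

Lemma mulKP K tw shift t :
  (forall l, letter_val l * K = coef_val (tw l) *: (K * letter_val l)) ->
  (forall s, kexp_val s * K = kexp_val (shift s)) ->
  term_val (mulK tw shift t) = term_val t * K.
Proof.
move=> twP shiftP; case: t => c [[s M] P].
rewrite /term_val /mono_val /= -scalerAl (mono_twist twP) scalerA shiftP.
by rewrite coef_val_cmul.
Qed.

Lemma mul_raisingP e t :
  \sum_(u <- mul_raising e t) term_val u = term_val t * letter_val e.
Proof.
case: t => c [[s M] P]; rewrite term_valE -scalerAl -(mulrA _ (word_val P)).
rewrite -(word_val1 e) -word_val_cat -(serre_raisingP (P ++ [:: e])).
rewrite mulr_sumr scaler_sumr big_map; apply: eq_bigr => cw _.
by rewrite term_valE coef_val_cmul -scalerAr scalerA.
Qed.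

Lemma absorbP c s M f u :
  \sum_(t <- absorb c s M f u) term_val t =
  (coef_val c *: (kexp_val s * word_val M)) * pterm_val f u.
Proof.
case: u => [[[c' s'] b] w].
have -> :
    (coef_val c *: (kexp_val s * word_val M)) * pterm_val f (c', s', b, w) =
    coef_val (cmul c (cmul c' (Ktwist M s'))) *:
      (kexp_val (kadd s s') *
         (word_val M * (if b then letter_val f else 1)) * word_val w).
  cbn [pterm_val]; rewrite -scalerAl -scalerAr scalerA.
  rewrite (mulrA (kexp_val s * word_val M)) -(mulrA (kexp_val s)) word_Ktwist.
  rewrite -scalerAr -scalerAl scalerA (mulrA (kexp_val s)) kaddP.
  by rewrite !coef_val_cmul !mulrA.
case: b => /=; last by rewrite big_seq1 term_valE mulr1.
rewrite -(word_val1 f) -word_val_cat -(serre_loweringP (M ++ [:: f])).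
rewrite mulr_sumr mulr_suml scaler_sumr big_map; apply: eq_bigr => cw _.
by rewrite term_valE coef_val_cmul -scalerAr -scalerAl scalerA.
Qed.

Lemma mul_loweringP f t : ~~ raising f ->
  \sum_(u <- mul_lowering f t) term_val u = term_val t * letter_val f.
Proof.
move=> hf; case: t => c [[s M] P]; rewrite /mul_lowering.
case: ifP => [hP | _]; last first.
  by rewrite big_seq1 !term_valE word_val_cat word_val1 -scalerAl !mulrA.
transitivity ((coef_val c *: (kexp_val s * word_val M)) *
                \sum_(u <- pass_lowering P f) pterm_val f u).
  by apply: sum_flatten_mapl => u; exact: absorbP.
by rewrite pass_loweringP // term_valE -!scalerAl !mulrA.
Qed.

Lemma mul_letterP l p : poly_val (mul_letter l p) = poly_val p * letter_val l.
Proof.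
rewrite /poly_val; apply: sum_flatten_mapr => t.
by case: ifP => hl; [exact: mul_raisingP | apply: mul_loweringP; rewrite hl].
Qed.

Lemma mul_wordP w p :
  poly_val (foldl (fun p l => mul_letter l p) p w) = poly_val p * word_val w.
Proof.
elim: w p => [|l w IH] p /=; first by rewrite /word_val big_nil mulr1.
by rewrite IH mul_letterP word_val_cons mulrA.
Qed.

Lemma mulK_iterP K tw shift n p :
  (forall l, letter_val l * K = coef_val (tw l) *: (K * letter_val l)) ->
  (forall s, kexp_val s * K = kexp_val (shift s)) ->
  poly_val (iter n (map (mulK tw shift)) p) = poly_val p * K ^+ n.
Proof.
move=> twP shiftP; elim: n => [|n IH] /=; first by rewrite mulr1.
rewrite /poly_val big_map exprSr mulrA -IH mulr_suml.
by apply: eq_bigr => t _; exact: mulKP.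
Qed.

Lemma pscaleP c p : poly_val (pscale c p) = coef_val c *: poly_val p.
Proof.
rewrite /poly_val big_map scaler_sumr; apply: eq_bigr => t _.
by rewrite /term_val coef_val_cmul scalerA.
Qed.

Lemma mul_monoP p t : poly_val (mul_mono p t) = poly_val p * term_val t.
Proof.
case: t => c [[[i j] M] P]; rewrite /mul_mono pscaleP mul_wordP.
rewrite (mulK_iterP _ _ twist1P kshift1P) (mulK_iterP _ _ twist0P kshift0P).
by rewrite /term_val /mono_val /kexp_val word_val_cat -scalerAr !mulrA.
Qed.

Lemma insert_termP t p : poly_val (insert_term t p) = term_val t + poly_val p.
Proof.
elim: p => [|t' p IH] /=; first by rewrite /poly_val big_seq1 big_nil addr0.
case: eqP => [E | _]; rewrite !poly_val_cons ?IH.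
  by rewrite /term_val /= E scalerDl -addrA addrCA.
by rewrite addrCA.
Qed.

Lemma collectP p : poly_val (collect p) = poly_val p.
Proof.
by elim: p => [|t p IH] //=; rewrite insert_termP IH poly_val_cons.
Qed.

Lemma pmulP p1 p2 : poly_val (pmul p1 p2) = poly_val p1 * poly_val p2.
Proof.
rewrite /pmul collectP /poly_val; apply: sum_flatten_mapl => t.
exact: mul_monoP.
Qed.

Lemma poneP : poly_val pone = 1.
Proof.
rewrite /poly_val big_seq1 term_valE kexp_val0 /word_val big_nil.
by rewrite scale1r !mulr1.
Qed.

Fixpoint expr_val (e : expr) : B :=
  match e with
  | XK0 => K0 | XK1 => K1 | XGen l => letter_val l | XOne => 1
  | XAdd x y => expr_val x + expr_val y | XSub x y => expr_val x - expr_val y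
  | XMul x y => expr_val x * expr_val y | XScale c x => coef_val c *: expr_val x
  | XPow x n => expr_val x ^+ n
  end.

Lemma nfP e : poly_val (nf e) = expr_val e.
Proof.
have single s M P : poly_val [:: (C1, (s, M, P))] =
    kexp_val s * word_val M * word_val P.
  by rewrite /poly_val big_seq1 /term_val scale1r.
elim: e => [| |l| |x IHx y IHy|x IHx y IHy|x IHx y IHy|c x IHx|x IHx n] /=.
- by rewrite single /kexp_val /word_val !big_nil /= expr1 !mulr1.
- by rewrite single /kexp_val /word_val !big_nil /= expr1 !mulr1 mul1r.
- case: ifP => _; rewrite single /kexp_val /word_val !big_nil !big_seq1 /=.
  + by rewrite !mul1r.
  + by rewrite !mulr1 mul1r.
- exact: poneP.
- by rewrite collectP poly_val_cat IHx IHy.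
- by rewrite collectP poly_val_cat pscaleP IHx IHy /= scaleN1r.
- by rewrite pmulP IHx IHy.
- by rewrite pscaleP IHx.
- by elim: n => [|n IHn] /=; rewrite ?poneP // pmulP IHn IHx exprS.
Qed.

Lemma nf_vanish e :
  List.Forall (fun t => coef_val t.1 = 0) (nf e) -> expr_val e = 0.
Proof.
rewrite -nfP /poly_val; elim=> [|t p t0 _ p0]; first by rewrite big_nil.
by rewrite big_cons p0 addr0 /term_val t0 scale0r.
Qed.

End Semantics.

Lemma fieldType_theory (F : fieldType) :
  field_theory 0 1 +%R *%R (fun x y : F => x - y) -%R (fun x y => x / y)
    GRing.inv (@eq F).
Proof.
split; [split | exact/eqP/oner_neq0 | by [] | by move=> x /eqP; exact: mulVf].
- exact: add0r. - exact: addrC. - exact: addrA. - exact: mul1r.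
- exact: mulrC. - exact: mulrA. - exact: mulrDl. - by []. - exact: subrr.
Qed.

Lemma coef_evalE (F : fieldType) (q : F) (env : seq F) (x : coef) :
  coef_eval 0 1 +%R *%R (fun x y => x - y) -%R (fun x y => x / y) GRing.inv
    q env x = coef_val q env x.
Proof. by elim: x => //= [x -> y -> | x -> y -> | x ->]. Qed.

Lemma nf_vanish_eval (F : fieldType) (q : F) (env : seq F) (B : algType F)
    (e0p e0m e1p e1m K0 K1 K0i K1i : B) (e : expr) :
  UqLsl2_rels q e0p e0m e1p e1m K0 K1 K0i K1i -> q != 0 ->
  List.Forall (fun t => coef_eval 0 1 +%R *%R (fun x y => x - y) -%R
                          (fun x y => x / y) GRing.inv q env t.1 = 0) (nf e) ->
  expr_val q env e0p e0m e1p e1m K0 K1 e = 0.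
Proof.
move=> rels q0 coefs; apply: (nf_vanish rels q0); move: coefs.
by apply: List.Forall_impl => t; rewrite coef_evalE.
Qed.

Theorem proposition8p5 (F : closedFieldType) (q a b c a' b' c' u v u' v' : F) :
  q != 0 -> b != 0 -> c != 0 -> b' != 0 -> c' != 0 ->
  q ^+ 2 != 1 -> q ^+ 2 != -1 ->
  u * v' = - (b * b' * q^-1 * (q - q^-1) ^+ 2) ->
  v * u' = - (c * c' * q^-1 * (q - q^-1) ^+ 2) ->
  forall (B : algType F) (e0p e0m e1p e1m K0 K1 K0i K1i : B),
  UqLsl2_rels q e0p e0m e1p e1m K0 K1 K0i K1i ->
  let R := u *: e0p + v *: (e1m * K1) in
  let L := u' *: e1p + v' *: (e0m * K0) in
  let A := a%:A + b *: K0 + c *: K1 + R in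
  let As := a'%:A + b' *: K0 + c' *: K1 + L in
  let g := - (a * (q - q^-1) ^+ 2) in
  let rho := a ^+ 2 * (q - q^-1) ^+ 2 - b * c * (q ^+ 2 - q ^- 2) ^+ 2 in
  let gs := - (a' * (q - q^-1) ^+ 2) in
  let rhos := a' ^+ 2 * (q - q^-1) ^+ 2 - b' * c' * (q ^+ 2 - q ^- 2) ^+ 2 in
  serre q A As = g *: (A ^+ 2 * As - As * A ^+ 2) + rho *: (A * As - As * A) /\
  serre q As A = gs *: (As ^+ 2 * A - A * As ^+ 2) + rhos *: (As * A - A * As).
Proof.
move=> q0 b0 c0 b'0 c'0 q2_neq1 _ uv' vu' B e0p e0m e1p e1m K0 K1 K0i K1i rels.
move=> R L A As g rho gs rhos.
have qq1 : q * q - 1 != 0 by rewrite subr_eq0 -expr2.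
have qqinv : q - q^-1 != 0.
  by apply: contra q2_neq1; rewrite subr_eq0 expr2 => /eqP {2}->; rewrite mulfV.
have uv'0 : u * v' != 0 by rewrite uv' oppr_eq0 !mulf_neq0 ?invr_eq0 ?expf_neq0.
have vu'0 : v * u' != 0 by rewrite vu' oppr_eq0 !mulf_neq0 ?invr_eq0 ?expf_neq0.
have u0 : u != 0 by apply: contraNneq uv'0 => ->; rewrite mul0r.
have v0 : v != 0 by apply: contraNneq vu'0 => ->; rewrite mul0r.
have v'E : v' = - (b * b' * q^-1 * (q - q^-1) ^+ 2) / u.
  by rewrite -uv' mulrC mulKf.
have u'E : u' = - (c * c' * q^-1 * (q - q^-1) ^+ 2) / v.
  by rewrite -vu' mulrC mulKf.
have [coefs1 coefs2] := tridiagonal_coefficients (fieldType_theory F)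
  (q := q) (a := a) (b := b) (c := c) (a' := a') (b' := b') (c' := c')
  (u := u) (v := v) (u' := u') (v' := v') (g := g) (r := rho) (g' := gs)
  (r' := rhos) (elimN eqP q0) (elimN eqP qqinv) (elimN eqP qq1)
  (elimN eqP u0) (elimN eqP v0) v'E u'E erefl erefl erefl erefl.
split; apply/eqP; rewrite -subr_eq0; apply/eqP.
- exact: (nf_vanish_eval rels q0 coefs1).
- exact: (nf_vanish_eval rels q0 coefs2).
Qed.
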